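(* Let $T>0$, $\chi\in\mathbb{R}$, $\zeta\in\mathcal{C}^{\alpha_0}(\mathbb{T})$, $Z\in C_T\mathcal{C}^\alpha_0$, and let $w\in C_{\eta;T}\mathcal{C}^\alpha$ be a mild solution of the remainder equation on $[0,T]$. Then $\bar w_t=\bar\zeta$ for all $t\in(0,T]$.
   Context: $\mathbb{T}=\mathbb{R}/\mathbb{Z}$; $\bar f=\langle f,1\rangle$ is the spatial mean; $\mathcal{C}^\beta=\mathcal{B}^\beta_{\infty,\infty}(\mathbb{T})$ (Hölder–Besov space), subscript $0$ for mean zero; $C_TE=C([0,T];E)$; $C_{\eta;T}E$ is the space of continuous $f:(0,T]\to E$ with $\sup_t(t^\eta\wedge1)\|f_t\|_E<\infty$. Fixed parameters $\alpha_0\in(-\tfrac12,0)$, $\alpha\in(0,\alpha_0+\tfrac12)$, $\frac{\alpha-\alpha_0}2<\eta<\frac14$. $\rho_f$ is the mean-zero solution of $-\partial_{xx}\rho_f=f-\bar f$. A mild solution of the remainder equation on $[0,T]$ is $w\in C_{\eta;T}\mathcal{C}^\alpha$ with $w_t=e^{t\Delta}\zeta+\int_0^te^{(t-s)\Delta}\chi\partial_x((w_s+Z_s)^2\partial_x\rho_{w_s+Z_s})ds$ for all $t\in(0,T]$. *)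

From HB Require Import structures.
From mathcomp Require Import all_boot all_order all_algebra.
From mathcomp Require Import all_classical all_reals all_analysis.
From Stdlib Require Import ClassicalEpsilon.
Set Implicit Arguments. Unset Strict Implicit. Unset Printing Implicit Defensive.
Import Order.TTheory GRing.Theory Num.Theory.
Import numFieldNormedType.Exports.
Local Open Scope classical_set_scope.
Local Open Scope ring_scope.

Section Defs.
Variable R : realType.

Notation leb := (@lebesgue_measure R).

(* A real periodic distribution u on T, given by its real Fourier coefficients:
   u.1 k = <u, cos(2 pi k .)>, u.2 k = <u, sin(2 pi k .)>, so that formally
   u = u.1 0 + 2 \sum_(k>=1) (u.1 k cos(2 pi k x) + u.2 k sin(2 pi k x)). *)
Definition tdist := ((nat -> R) * (nat -> R))%type.

Definition torus_fun (f : R -> R) : Prop :=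
  (forall x, f (x + 1) = f x) /\ continuous f.

Definition tmean (f : R -> R) : R := \int[leb]_(x in `[0, 1]) f x.

Definition fdist (f : R -> R) : tdist :=
  (fun k => \int[leb]_(x in `[0, 1]) (f x * cos (2 * pi * k%:R * x)),
   fun k => \int[leb]_(x in `[0, 1]) (f x * sin (2 * pi * k%:R * x))).

Definition dmean (u : tdist) : R := u.1 0%N.

Definition dsub (u v : tdist) : tdist :=
  (fun k => u.1 k - v.1 k, fun k => u.2 k - v.2 k).

Definition heat (t : R) (u : tdist) : tdist :=
  (fun k => expR (- (4 * pi ^+ 2 * k%:R ^+ 2 * t)) * u.1 k,
   fun k => expR (- (4 * pi ^+ 2 * k%:R ^+ 2 * t)) * u.2 k).

Definition ddx (u : tdist) : tdist :=
  (fun k => 2 * pi * k%:R * u.2 k, fun k => - (2 * pi * k%:R * u.1 k)).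

Definition dscale (c : R) (u : tdist) : tdist :=
  (fun k => c * u.1 k, fun k => c * u.2 k).

Definition smooth (f : R -> R) : Prop :=
  forall (n : nat) (x : R), derivable (derive1n n f) x 1.

Definition dyadic_partition (chi0 phi : R -> R) : Prop :=
  (smooth chi0 /\ smooth phi) /\
  ((forall x, 0 <= chi0 x <= 1) /\ (forall x, 0 <= phi x <= 1)) /\
  ((forall x, chi0 (- x) = chi0 x) /\ (forall x, phi (- x) = phi x)) /\
  ((forall x, 4 / 3 <= `|x| -> chi0 x = 0) /\
   (forall x, `|x| <= 3 / 4 \/ 8 / 3 <= `|x| -> phi x = 0)) /\
  (forall x, (fun n : nat => chi0 x + \sum_(j < n) phi (x / 2 ^+ j)) @ \oo --> (1 : R)).

(* Littlewood--Paley blocks: lp n = Delta_{n-1}, i.e. lp 0 = Delta_{-1}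
   (multiplier chi0) and lp (m+1) = Delta_m (multiplier phi(2^-m .)).
   Since the multipliers vanish for |k| >= 2^(n+1), the sum is finite. *)
Definition lp_mult (chi0 phi : R -> R) (n : nat) (xi : R) : R :=
  if n is m.+1 then phi (xi / 2 ^+ m) else chi0 xi.

Definition lp_block (chi0 phi : R -> R) (u : tdist) (n : nat) (x : R) : R :=
  \sum_(k < 2 ^ n.+1)
    lp_mult chi0 phi n k%:R *
    (if val k == 0%N then u.1 0%N
     else 2 * (u.1 k * cos (2 * pi * k%:R * x) + u.2 k * sin (2 * pi * k%:R * x))).

(* weight 2^{j beta} with j = n - 1 *)
Definition lp_weight (beta : R) (n : nat) : R := 2 `^ ((n%:R - 1) * beta).

Definition in_holder (chi0 phi : R -> R) (beta : R) (u : tdist) : Prop :=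
  exists C : R, forall (n : nat) (x : R),
    lp_weight beta n * `|lp_block chi0 phi u n x| <= C.

Definition holder_norm (chi0 phi : R -> R) (beta : R) (u : tdist) : R :=
  sup [set y | exists (n : nat) (x : R),
               y = lp_weight beta n * `|lp_block chi0 phi u n x|].

Definition in_CT_holder0 (chi0 phi : R -> R) (T alpha : R) (Z : R -> R -> R) : Prop :=
  (forall t, 0 <= t <= T ->
     [/\ torus_fun (Z t), in_holder chi0 phi alpha (fdist (Z t)) & tmean (Z t) = 0])
  /\ (forall t, 0 <= t <= T -> forall e : R, 0 < e -> exists2 d : R, 0 < d &
        forall s, 0 <= s <= T -> `|s - t| < d ->
          holder_norm chi0 phi alpha (dsub (fdist (Z s)) (fdist (Z t))) < e).

Definition in_CetaT_holder (chi0 phi : R -> R) (eta T alpha : R) (w : R -> R -> R) : Prop :=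
  [/\ (forall t, 0 < t <= T ->
         torus_fun (w t) /\ in_holder chi0 phi alpha (fdist (w t))),
      (forall t, 0 < t <= T -> forall e : R, 0 < e -> exists2 d : R, 0 < d &
         forall s, 0 < s <= T -> `|s - t| < d ->
           holder_norm chi0 phi alpha (dsub (fdist (w s)) (fdist (w t))) < e) &
      exists C : R, forall t, 0 < t <= T ->
         Num.min (t `^ eta) 1 * holder_norm chi0 phi alpha (fdist (w t)) <= C].

Definition is_rho (f r : R -> R) : Prop :=
  [/\ forall x, r (x + 1) = r x,
      forall x, derivable r x 1,
      forall x, derivable (derive1 r) x 1,
      forall x, - derive1 (derive1 r) x = f x - tmean f &
      tmean r = 0].

Definition rho (f : R -> R) : R -> R :=
  epsilon (inhabits (fun _ : R => 0)) (is_rho f).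

Definition nonlin (w Z : R -> R -> R) (s : R) (x : R) : R :=
  (w s x + Z s x) ^+ 2 * derive1 (rho (fun y => w s y + Z s y)) x.

Definition duhamel (chi : R) (w Z : R -> R -> R) (t s : R) : tdist :=
  heat (t - s) (dscale chi (ddx (fdist (nonlin w Z s)))).

(* mild solution of the remainder equation on [0,T]; the identity is an
   identity of distributions on T, tested against every Fourier mode *)
Definition mild_solution (chi0 phi : R -> R) (eta alpha T chi : R)
    (zeta : tdist) (Z w : R -> R -> R) : Prop :=
  in_CetaT_holder chi0 phi eta T alpha w /\
  forall t, 0 < t <= T -> forall k : nat,
    [/\ leb.-integrable `]0, t] (fun s => ((duhamel chi w Z t s).1 k)%:E),
        leb.-integrable `]0, t] (fun s => ((duhamel chi w Z t s).2 k)%:E),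
        (fdist (w t)).1 k = (heat t zeta).1 k
                            + \int[leb]_(s in `]0, t]) (duhamel chi w Z t s).1 k &
        (fdist (w t)).2 k = (heat t zeta).2 k
                            + \int[leb]_(s in `]0, t]) (duhamel chi w Z t s).2 k].

End Defs.

(** The mean is the zeroth Fourier mode. The heat semigroup acts on that mode
    by the multiplier [expR 0 = 1], and every Duhamel integrand is a derivative,
    whose zeroth mode vanishes; so the zeroth mode of the mild formulation
    reduces to [mean (w t) = mean zeta + \int 0]. *)
From Pilot Require Import Defs.
From HB Require Import structures.
From mathcomp Require Import all_boot all_order all_algebra.
From mathcomp Require Import all_classical all_reals all_analysis.
Import Order.TTheory GRing.Theory Num.Theory.
Import numFieldNormedType.Exports.
Local Open Scope classical_set_scope.
Local Open Scope ring_scope.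

Section MeanConservation.
Variable R : realType.

Lemma tmean_fdist (f : R -> R) : tmean f = dmean (fdist f).
Proof.
rewrite /tmean /dmean /fdist /=; apply: eq_Rintegral => x _.
by rewrite !(mulr0, mul0r) cos0 mulr1.
Qed.

Lemma dmean_heat (t : R) (u : tdist R) : dmean (heat t u) = dmean u.
Proof. by rewrite /dmean /heat /= expr0n /= !(mulr0, mul0r) oppr0 expR0 mul1r. Qed.

Lemma dmean_ddx (u : tdist R) : dmean (ddx u) = 0.
Proof. by rewrite /dmean /ddx /= mulr0 mul0r. Qed.

Lemma dmean_dscale (c : R) (u : tdist R) : dmean (Defs.dscale c u) = c * dmean u.
Proof. by []. Qed.

Lemma dmean_duhamel (chi : R) (w Z : R -> R -> R) (t s : R) :
  dmean (duhamel chi w Z t s) = 0.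
Proof. by rewrite /duhamel dmean_heat dmean_dscale dmean_ddx mulr0. Qed.

Lemma mild_solution_tmean (chi0 phi : R -> R) (eta alpha T chi : R)
    (zeta : tdist R) (Z w : R -> R -> R) :
  mild_solution chi0 phi eta alpha T chi zeta Z w ->
  forall t, 0 < t <= T -> tmean (w t) = dmean zeta.
Proof.
move=> [_ mild] t t_in.
have [_ _ mode0 _] := mild t t_in 0%N.
have mean_eq : dmean (fdist (w t)) = dmean (heat t zeta)
    + \int[lebesgue_measure]_(s in `]0, t]) dmean (duhamel chi w Z t s) := mode0.
rewrite tmean_fdist mean_eq dmean_heat.
have -> : (fun s => dmean (duhamel chi w Z t s)) = fun=> 0.
  by apply/funext => s; apply: dmean_duhamel.
by rewrite Rintegral_cst // mul0r addr0.
Qed.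

End MeanConservation.

Theorem corollary3p7 (R : realType) (chi0 phi : R -> R)
    (alpha0 alpha eta T chi : R) (zeta : tdist R) (Z w : R -> R -> R) :
  dyadic_partition chi0 phi ->
  - (1 / 2) < alpha0 -> alpha0 < 0 ->
  0 < alpha -> alpha < alpha0 + 1 / 2 ->
  (alpha - alpha0) / 2 < eta -> eta < 1 / 4 ->
  0 < T ->
  in_holder chi0 phi alpha0 zeta ->
  in_CT_holder0 chi0 phi T alpha Z ->
  mild_solution chi0 phi eta alpha T chi zeta Z w ->
  forall t, 0 < t <= T -> tmean (w t) = dmean zeta.
Proof.
(* Conservation of the mean is purely structural: the regularity assumptions
   only matter for existence of mild solutions, not for this identity. *)
by move=> _ _ _ _ _ _ _ _ _ _; apply: mild_solution_tmean.
Qed.
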